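(* Let $m,n\ge1$ with $(m,n)=1$, let $d_1,\dots,d_{\tau(m)}$ and $e_1,\dots,e_{\tau(n)}$ be orderings of the positive divisors of $m$ and $n$, and order the divisors of $mn$ as $f_{\sigma(i,i')}=d_ie_{i'}$, where $\sigma(i,i')=(i-1)\tau(n)+i'$ (lexicographic order). With the matrices $M_i(N),D_i(N),W(N)$ defined as in the context (for $N=m$, $n$, $mn$ with these divisor orderings), we have, for all $1\le i,j,k\le\tau(m)$ and $1\le i',j',k'\le\tau(n)$, $$[M_{\sigma(i,i')}(mn)]_{\sigma(j,j'),\sigma(k,k')}=[M_i(m)]_{j,k}[M_{i'}(n)]_{j',k'},$$ $$[D_{\sigma(i,i')}(mn)]_{\sigma(j,j'),\sigma(k,k')}=[D_i(m)]_{j,k}[D_{i'}(n)]_{j',k'},$$ $$[W(mn)]_{\sigma(j,j'),\sigma(k,k')}=[W(m)]_{j,k}[W(n)]_{j',k'}.$$ That is, $M_{\sigma(i,i')}(mn)=M_i(m)\otimes M_{i'}(n)$, $D_{\sigma(i,i')}(mn)=D_i(m)\otimes D_{i'}(n)$, $W(mn)=W(m)\otimes W(n)$. Moreover $W(mn)=S(mn)$, where $[S(mn)]_{j,k}=c_{f_j}(mn/f_k)$.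
   Context: For integers $N\ge1$ and $x$, $c_N(x)=\sum_{1\le j\le N,\ (j,N)=1}e^{2\pi ijx/N}$ is the Ramanujan sum; $\phi$ is Euler's totient, $\tau(N)$ the number of divisors of $N$. Given an ordering $d_1,\dots,d_{\tau(N)}$ of the divisors of $N$, let $K_j=\{a\in\mathbb{Z}/N\mathbb{Z}:(a,N)=N/d_j\}$ (so $|K_j|=\phi(d_j)$). For $1\le i,j,k\le\tau(N)$, let $a_{i,j,k}(N)$ be the number of $(x,y)\in K_i\times K_j$ with $x+y=z$ in $\mathbb{Z}/N\mathbb{Z}$, for a fixed $z\in K_k$ (independent of the choice of $z$). Define $M_i(N)=(a_{i,j,k}(N))_{j,k}$, $W(N)=(w_{j,k})_{j,k}$ with $w_{j,k}=\phi(d_j)c_{d_k}(N/d_j)/\phi(d_k)$, and $D_i(N)=\operatorname{diag}(w_{i,1},\dots,w_{i,\tau(N)})$. *)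

From mathcomp Require Import all_boot all_order all_algebra all_field.
Set Implicit Arguments. Unset Strict Implicit. Unset Printing Implicit Defensive.
Import Order.TTheory GRing.Theory Num.Theory.
Local Open Scope ring_scope.

Definition tau (N : nat) : nat := size (divisors N).

(* ds is an ordering d_1,...,d_tau(N) of the divisors of N (0-based: d_i = nth 0 ds i) *)
Definition divisor_ordering (N : nat) (ds : seq nat) : Prop := perm_eq ds (divisors N).

(* e^{2 pi i / N} : N.-root picks the N-th root of -1 of minimal nonnegative
   argument, i.e. e^{i pi / N}; its square is e^{2 pi i / N}. *)
Definition expi (N : nat) : algC := (N.-root (-1)) ^+ 2.

Definition ramanujan (N x : nat) : algC :=
  \sum_(j < N.+1 | (0 < j)%N && coprime j N) expi N ^+ (j * x).

(* a_{i,j,k}(N), 0-based indices into the ordering ds; the fixed z in K_k is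
   taken to be N/d_k (mod N), which satisfies (z,N) = N/d_k. *)
Definition a_coef (N : nat) (ds : seq nat) (i j k : nat) : nat :=
  #|[set p : 'I_N * 'I_N |
       [&& gcdn p.1 N == N %/ nth 0 ds i,
           gcdn p.2 N == N %/ nth 0 ds j &
           (p.1 + p.2) %% N == (N %/ nth 0 ds k) %% N]%N]|.

Definition Mentry (N : nat) (ds : seq nat) (i j k : nat) : nat := a_coef N ds i j k.

Definition Wentry (N : nat) (ds : seq nat) (j k : nat) : algC :=
  (totient (nth 0 ds j))%:R * ramanujan (nth 0 ds k) (N %/ nth 0 ds j)%N
  / (totient (nth 0 ds k))%:R.

Definition Dentry (N : nat) (ds : seq nat) (i j k : nat) : algC :=
  if j == k then Wentry N ds i j else 0.

Definition Sentry (N : nat) (fs : seq nat) (j k : nat) : algC :=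
  ramanujan (nth 0 fs j) (N %/ nth 0 fs k)%N.

Definition prod_ordering (ds es : seq nat) : seq nat :=
  [seq d * e | d <- ds, e <- es]%N.

(* sigma(i,i') = i * tau(n) + i'  (0-based version of (i-1)tau(n)+i') *)
Definition sigma (taun i i' : nat) : nat := (i * taun + i')%N.

(* By the Chinese remainder theorem, the pairs (x, y) counted by a_{i,j,k}(mn)
   split into pairs counted modulo m and modulo n, and c_{de}(x) = c_d(x) c_e(x)
   for coprime d, e; multiplying the target or the argument by a unit changes
   neither a count nor a Ramanujan sum, which absorbs the cross factors
   n/e_{k'} mod m and m/d_k mod n.  W = S is the symmetry
   phi(d) c_e(N/d) = phi(e) c_d(N/e): both sides equal the sum of
   zeta_N^(a (N/d) b (N/e)) over the units a mod d and b mod e, after lifting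
   each unit a mod d to a unit mod N.  Computing Ramanujan sums from any
   primitive root requires expi N to be primitive, which follows from
   N.-root (-1) having maximal real part among the 2N-th roots of unity
   other than 1. *)

From mathcomp Require Import all_boot all_order all_algebra all_field.
From mathcomp Require Import ring.
Set Implicit Arguments.
Unset Strict Implicit.
Unset Printing Implicit Defensive.

Import Order.TTheory GRing.Theory Num.Theory.
Local Open Scope ring_scope.

(** * Primitivity of [expi N] *)

Lemma exists_max_Re (T : finType) (P : pred T) (f : T -> algC) (x0 : T) :
  P x0 -> exists2 x, P x & forall y, P y -> 'Re (f y) <= 'Re (f x).
Proof.
move=> Px0.
suff [[]|[x Px Hx]] : enum P = [::] \/
    exists2 x, x \in enum P & {in enum P, forall y, 'Re (f y) <= 'Re (f x)}.
- by move=> enumP0; have := mem_enum P x0; rewrite enumP0 in_nil unfold_in Px0.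
- by exists x => [|y Py]; [rewrite mem_enum in Px | apply: Hx; rewrite mem_enum].
elim: (enum P) => [|a s [->|[x xs Hx]]]; [by left | right | right].
  by exists a => [|y]; rewrite ?inE // => /eqP->.
have [le_ax|lt_xa] := real_leP (Creal_Re (f a)) (Creal_Re (f x)).
  exists x => [|y]; first by rewrite inE xs orbT.
  by rewrite inE => /predU1P[->|/Hx].
exists a => [|y]; first by rewrite inE eqxx.
by rewrite inE => /predU1P[->//|/Hx le_yx]; exact: le_trans le_yx (ltW lt_xa).
Qed.

Lemma sqr_ReIm_norm1 (z : algC) : `|z| = 1 -> 'Re z ^+ 2 + 'Im z ^+ 2 = 1.
Proof. by move=> z1; rewrite -normC2_Re_Im z1 expr1n. Qed.

Lemma norm_unity_root (z : algC) n : (0 < n)%N -> z ^+ n = 1 -> `|z| = 1.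
Proof.
move=> n_gt0 zn1; apply/eqP; rewrite -(pexpr_eq1 n_gt0) ?normr_ge0 //.
by rewrite -normrX zn1 normr1.
Qed.

(* [v = p + i q] and [y = c + i s] on the unit circle, with the real parts of
   [v y] and [v y^*] at most that of [v]. *)
Lemma unit_circle_rotation (R : numDomainType) (p q c s : R) :
  p ^+ 2 + q ^+ 2 = 1 -> c ^+ 2 + s ^+ 2 = 1 -> c < 1 ->
  p * c - q * s <= p -> p * c + q * s <= p -> p <= c -> False.
Proof.
move=> pq1 cs1 c_lt1 rot_le rot'_le le_pc.
have A_ge0 : 0 <= p - p * c + q * s.
  by rewrite (_ : _ + _ = p - (p * c - q * s)) ?subr_ge0 //; ring.
have B_ge0 : 0 <= p - p * c - q * s.
  by rewrite (_ : _ - _ = p - (p * c + q * s)) ?subr_ge0 //; ring.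
have c1_gt0 : 0 < 1 - c by rewrite subr_gt0.
have AB : (p - p * c + q * s) * (p - p * c - q * s) = (1 - c) * (2 * p ^+ 2 - 1 - c).
  have q2 : q ^+ 2 = 1 - p ^+ 2 by rewrite -pq1; ring.
  have s2 : s ^+ 2 = 1 - c ^+ 2 by rewrite -cs1; ring.
  transitivity ((p - p * c) ^+ 2 - q ^+ 2 * s ^+ 2); first by ring.
  by rewrite q2 s2; ring.
have F_ge0 : 0 <= 2 * p ^+ 2 - 1 - c by rewrite -(pmulr_rge0 _ c1_gt0) -AB mulr_ge0.
have p_ge0 : 0 <= p.
  have : 0 <= (p - p * c + q * s) + (p - p * c - q * s) by rewrite addr_ge0.
  rewrite (_ : _ + _ = p * (2 * (1 - c))); last by ring.
  by rewrite pmulr_lge0 // mulr_gt0 // ltr0n.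
have c_ge0 : 0 <= c := le_trans p_ge0 le_pc.
have : 0 <= (2 * c + 1) * (c - 1).
  rewrite (_ : _ * _ = (2 * p ^+ 2 - 1 - c) + 2 * ((c - p) * (c + p))); last by ring.
  by rewrite addr_ge0 // mulr_ge0 ?ler0n // mulr_ge0 ?subr_ge0 ?addr_ge0.
rewrite pmulr_rge0; last by rewrite ltr_wpDl ?ltr01 // mulr_ge0 ?ler0n.
by rewrite subr_ge0 (lt_geF c_lt1).
Qed.

Lemma Re_rotation_max (v y : algC) : `|v| = 1 -> `|y| = 1 ->
  'Re (v * y) <= 'Re v -> 'Re (v * y^*) <= 'Re v -> 'Re v <= 'Re y -> y = 1.
Proof.
move=> v1 y1; rewrite ReM ReM Re_conj Im_conj mulrN opprK => rot_le rot'_le le_vy.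
have [Re_y_lt1|Re_y_ge1] := real_ltP (Creal_Re y) (real1 algC).
  have := unit_circle_rotation (sqr_ReIm_norm1 v1) (sqr_ReIm_norm1 y1) Re_y_lt1.
  by case/(_ rot_le rot'_le le_vy).
have Re_y1 : 'Re y = 1.
  apply/eqP; rewrite eq_le Re_y_ge1 andbT -y1.
  exact: le_trans (real_ler_norm (Creal_Re y)) (leif_normC_Re_Creal y).1.
have /eqP : 'Im y ^+ 2 = 0.
  by apply: (@addrI _ 1); rewrite addr0 -{1}(expr1n _ 2) -Re_y1 sqr_ReIm_norm1.
by rewrite sqrf_eq0 => /eqP Im_y0; rewrite [y]Crect Re_y1 Im_y0 mulr0 addr0.
Qed.

Lemma max_Re_prim_root M (y : algC) : (1 < M)%N -> y ^+ M = 1 -> y != 1 ->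
  (forall z, z ^+ M = 1 -> z != 1 -> 'Re z <= 'Re y) -> M.-primitive_root y.
Proof.
move=> M_gt1 yM1 y_neq1 Re_y_max; have M_gt0 := ltnW M_gt1.
have [x x_prim] := C_prim_root_exists M_gt0.
have xM1 := prim_expr_order x_prim.
have [/existsP[j /eqP xyj]|/existsPn x_notin_y] := boolP [exists j : 'I_M, x == y ^+ j].
  have [r r_prim r_dvdM] := prim_order_exists M_gt0 yM1.
  suff -> : M = r by [].
  apply/eqP; rewrite eqn_dvd r_dvdM (prim_order_dvd x_prim) xyj andbT.
  by rewrite exprAC (prim_expr_order r_prim) expr1n.
(* [v] maximizes the real part on the coset [x <y>], which avoids 1. *)
have [j0 _ max_j0] :=
  @exists_max_Re _ predT (fun j : 'I_M => x * y ^+ j) (Ordinal M_gt0) isT.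
set v := x * y ^+ j0 in max_j0.
have Re_v_max k : 'Re (v * y ^+ k) <= 'Re v.
  have := max_j0 (Ordinal (ltn_pmod (j0 + k) M_gt0)) isT.
  by rewrite /= expr_mod // exprD mulrA.
have vM1 : v ^+ M = 1 by rewrite exprMn xM1 exprAC yM1 expr1n mulr1.
have v_neq1 : v != 1.
  apply/eqP => v1; have /negP := x_notin_y (Ordinal (ltn_pmod (M - j0) M_gt0)); apply.
  rewrite /= expr_mod //; apply/eqP.
  have : v * y ^+ (M - j0) = y ^+ (M - j0) by rewrite v1 mul1r.
  by rewrite -mulrA -exprD subnKC ?yM1 ?mulr1 // ltnW.
have y_norm1 := norm_unity_root (ltnW M_gt1) yM1.
have y_conj : y^* = y ^+ (M - 1).
  have y_neq0 : y != 0 by rewrite -normr_eq0 y_norm1 oner_neq0.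
  apply: (mulfI y_neq0).
  by rewrite -normCK y_norm1 expr1n -exprS subn1 prednK.
case/eqP: y_neq1; apply: (Re_rotation_max (norm_unity_root M_gt0 vM1) y_norm1).
- by rewrite -[y]expr1 Re_v_max.
- by rewrite y_conj Re_v_max.
- exact: Re_y_max.
Qed.

(* [N.-root (-1)] maximizes the real part among the [2N]-th roots of unity
   other than 1 (the maximizer is primitive, so it is an [N]-th root of [-1]). *)
Lemma expi_prim N : (0 < N)%N -> N.-primitive_root (expi N).
Proof.
move=> N_gt0; rewrite /expi; set w := N.-root (-1).
have wN : w ^+ N = -1 := rootCK N_gt0 (-1).
have M_gt1 : (1 < 2 * N)%N by rewrite mul2n -addnn (leq_add N_gt0 N_gt0).
have M_gt0 := ltnW M_gt1.
have wM1 : w ^+ (2 * N) = 1 by rewrite mulnC exprM wN sqrrN expr1n.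
have N1_neq1 : (-1 : algC) != 1 by rewrite eq_sym -subr_eq0 opprK -mulr2n pnatr_eq0.
have w_neq1 : w != 1 by apply: contra N1_neq1 => /eqP w1; rewrite -wN w1 expr1n.
have [x x_prim] := C_prim_root_exists M_gt0.
have [i i_gt0 max_i] :=
  @exists_max_Re _ (fun i : 'I_(2 * N) => (0 < i)%N) (fun i => x ^+ i) (Ordinal M_gt1) isT.
set y := x ^+ i in max_i.
have Re_y_max z : z ^+ (2 * N) = 1 -> z != 1 -> 'Re z <= 'Re y.
  move=> zM1 z_neq1; have [k zk] := prim_rootP x_prim zM1.
  rewrite zk; apply: max_i; rewrite lt0n.
  by apply: contraNneq z_neq1; rewrite zk => ->.
have y_neq1 : y != 1.
  by rewrite /y -(expr0 x) (eq_prim_root_expr x_prim) mod0n modn_small // -lt0n.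
have yM1 : y ^+ (2 * N) = 1 by rewrite exprAC (prim_expr_order x_prim) expr1n.
have y_prim := max_Re_prim_root M_gt1 yM1 y_neq1 Re_y_max.
have yN : y ^+ N = -1.
  have : (y ^+ N) ^+ 2 == 1 by rewrite -exprM mulnC yM1.
  rewrite sqrf_eq1 => /orP[|/eqP//].
  rewrite -(prim_order_dvd y_prim) => /(dvdn_leq N_gt0).
  by rewrite leqNgt mul2n -addnn -[X in (X < _)%N]addn0 ltn_add2l N_gt0.
have le_yw : 'Re y <= 'Re w.
  have [Im_y_ge0|Im_y_lt0] := real_leP (real0 _) (Creal_Im y).
    exact: rootC_Re_max N_gt0 yN Im_y_ge0.
  rewrite -Re_conj; apply: rootC_Re_max N_gt0 _ _.
    by rewrite -rmorphXn /= yN rmorphN1.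
  by rewrite Im_conj oppr_ge0 ltW.
have w_prim : (2 * N).-primitive_root w.
  apply: max_Re_prim_root M_gt1 wM1 w_neq1 _ => z zM1 z_neq1.
  exact: le_trans (Re_y_max z zM1 z_neq1) le_yw.
by have := dvdn_prim_root w_prim (dvdn_mull 2 (dvdnn N)); rewrite mulnK.
Qed.

(** * Ramanujan sums *)

Lemma eqn_modMr_coprime u q a b : coprime u q ->
  (a * u == b * u %[mod q])%N = (a == b %[mod q])%N.
Proof.
move=> co_uq; wlog le_ab : a b / (a <= b)%N.
  move=> IH; have [/IH//|/ltnW/IH] := leqP a b.
  by rewrite eq_sym [X in _ = X]eq_sym.
rewrite eq_sym [X in _ = X]eq_sym !eqn_mod_dvd ?leq_mul2r ?le_ab ?orbT //.
by rewrite -mulnBl Gauss_dvdl // coprime_sym.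
Qed.

Lemma ord_eq_mod q (a b : 'I_q) : (a == b %[mod q])%N -> a = b.
Proof. by rewrite !modn_small // => /eqP/val_inj. Qed.

Lemma ord_mulr_coprime_inj q (q_gt0 : (0 < q)%N) u : coprime u q ->
  injective (fun j : 'I_q => Ordinal (ltn_pmod (j * u) q_gt0)).
Proof.
by move=> co_uq i j /(congr1 val) /= /eqP; rewrite eqn_modMr_coprime // => /ord_eq_mod.
Qed.

Section RamanujanAt.

Variable R : fieldType.
Implicit Types (z : R) (q x : nat).

Definition ramanujan_at z q x : R := \sum_(j < q | coprime j q) z ^+ (j * x).

Lemma ramanujan_atX z k q x : ramanujan_at (z ^+ k) q x = ramanujan_at z q (k * x).
Proof. by apply: eq_bigr => j _; rewrite -exprM mulnCA. Qed.

Lemma ramanujan_atMn_coprime z q x u : z ^+ q = 1 -> coprime u q ->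
  ramanujan_at z q (u * x) = ramanujan_at z q x.
Proof.
have [-> _ _|q_gt0 zq1 co_uq] := posnP q; first by rewrite /ramanujan_at !big_ord0.
rewrite /ramanujan_at [RHS](reindex_inj (@ord_mulr_coprime_inj _ q_gt0 _ co_uq)) /=.
apply: eq_big => [j|j _] /=; first by rewrite coprime_modl coprimeMl co_uq andbT.
by rewrite mulnA -!(mulnC x) !exprM expr_mod ?exprM // exprAC zq1 expr1n.
Qed.

Lemma eq_ramanujan_at_prim z z' q x :
  q.-primitive_root z -> q.-primitive_root z' -> ramanujan_at z q x = ramanujan_at z' q x.
Proof.
move=> z_prim z'_prim; have [k z'E] := prim_rootP z_prim (prim_expr_order z'_prim).
have co_kq : coprime k q by rewrite -(prim_root_exp_coprime k z_prim) -z'E.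
by rewrite z'E ramanujan_atX ramanujan_atMn_coprime // (prim_expr_order z_prim).
Qed.

(* Chinese remainder theorem: [(a, b) |-> e a + d b] is a bijection from
   [Z/d x Z/e] onto [Z/de] matching units with units. *)
Lemma ramanujan_atM z d e x : coprime d e -> (d * e).-primitive_root z ->
  ramanujan_at z (d * e) x = ramanujan_at (z ^+ e) d x * ramanujan_at (z ^+ d) e x.
Proof.
move=> co_de z_prim; have de_gt0 := prim_order_gt0 z_prim.
have [d_gt0 e_gt0] : (0 < d)%N /\ (0 < e)%N by apply/andP; rewrite -muln_gt0.
pose h (p : 'I_d * 'I_e) : 'I_(d * e) := Ordinal (ltn_pmod (e * p.1 + d * p.2) de_gt0).
have h_inj : injective h.
  move=> [a b] [a' b'] /(congr1 val) /= /eqP.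
  rewrite chinese_remainder // => /andP[eq_d eq_e].
  congr (_, _); apply: ord_eq_mod.
    rewrite -(@eqn_modMr_coprime e) 1?coprime_sym //.
    by move: eq_d; rewrite !(mulnC d) !(addnC (e * _)%N) !modnMDl !(mulnC e).
  rewrite -(@eqn_modMr_coprime d) //.
  by move: eq_e; rewrite !(mulnC e) !modnMDl !(mulnC d).
have h_bij : bijective h by apply: inj_card_bij h_inj _; rewrite card_prod !card_ord.
rewrite /ramanujan_at big_distrlr pair_big /= (reindex h (onW_bij _ h_bij)) /=.
apply: eq_big => [[a b]|[a b] _] /=.
  rewrite coprime_modl coprimeMr; congr andb.
    rewrite -coprime_modl (mulnC d) addnC modnMDl coprime_modl coprimeMl.
    by rewrite (coprime_sym e d) co_de.
  by rewrite -coprime_modl (mulnC e) modnMDl coprime_modl coprimeMl co_de.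
rewrite mulnC exprM expr_mod; last by rewrite exprAC (prim_expr_order z_prim) expr1n.
by rewrite -!exprM mulnDr exprD; congr (z ^+ _ * z ^+ _); ring.
Qed.

End RamanujanAt.

Lemma ramanujan0 x : ramanujan 0 x = 0.
Proof. by rewrite /ramanujan big_pred0 // => -[[]]. Qed.

Lemma ramanujan_expi q x : (0 < q)%N -> ramanujan q x = ramanujan_at (expi q) q x.
Proof.
move=> q_gt0; have zq1 := prim_expr_order (expi_prim q_gt0).
rewrite /ramanujan /ramanujan_at big_mkcond big_ord_recr /=.
(* The term [j = q] of [ramanujan] plays the role of the term [j = 0]. *)
have [q1|q_neq1] := eqVneq q 1%N.
  rewrite q1 in zq1 *; rewrite big_ord1 /= add0r -[expi 1]expr1 zq1 !expr1n.
  by rewrite big_mkcond big_ord1 /= expr1n.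
rewrite /coprime gcdnn (negbTE q_neq1) andbF addr0 -big_mkcond.
apply: eq_bigl => j; rewrite lt0n.
by case: (nat_of_ord j) => [|k] //=; rewrite gcd0n (negbTE q_neq1).
Qed.

Lemma ramanujan_prim z q x : q.-primitive_root z -> ramanujan q x = ramanujan_at z q x.
Proof.
move=> z_prim; have q_gt0 := prim_order_gt0 z_prim.
exact/(etrans (ramanujan_expi x q_gt0))/eq_ramanujan_at_prim/z_prim/expi_prim.
Qed.

Lemma ramanujanMn_coprime q x u : coprime u q -> ramanujan q (u * x) = ramanujan q x.
Proof.
have [->|q_gt0 co_uq] := posnP q; first by rewrite !ramanujan0.
by rewrite !ramanujan_expi // ramanujan_atMn_coprime // prim_expr_order ?expi_prim.
Qed.

Lemma ramanujanM d e x : coprime d e -> ramanujan (d * e) x = ramanujan d x * ramanujan e x.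
Proof.
have [->|d_gt0] := posnP d; first by rewrite mul0n ramanujan0 mul0r.
have [->|e_gt0] := posnP e; first by rewrite muln0 ramanujan0 mulr0.
move=> co_de; have de_gt0 : (0 < d * e)%N by rewrite muln_gt0 d_gt0.
have z_prim := expi_prim de_gt0.
rewrite (ramanujan_prim x z_prim) ramanujan_atM //.
have := dvdn_prim_root z_prim (dvdn_mulr e (dvdnn d)); rewrite mulKn // => zd_prim.
have := dvdn_prim_root z_prim (dvdn_mull d (dvdnn e)); rewrite mulnK // => ze_prim.
by rewrite -(ramanujan_prim x zd_prim) -(ramanujan_prim x ze_prim).
Qed.

(* Add to [a] a multiple of [d] by the primes of [N] not dividing [a]. *)
Lemma coprime_lift d N a : (0 < N)%N -> coprime a d ->
  exists2 a', (a' = a %[mod d])%N & coprime a' N.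
Proof.
move=> N_gt0 co_ad; pose pi : nat_pred := [pred p | ~~ (p %| a)%N].
exists (a + d * N`_pi)%N; first by rewrite addnC mulnC modnMDl.
have dvd_part p : prime p -> (p %| N)%N -> (p %| N`_pi)%N = ~~ (p %| a)%N.
  move=> p_pr p_dvdN; have := pi_of_part pi N_gt0 p.
  by rewrite /pi_of /= !inE /= !mem_primes p_pr N_gt0 p_dvdN part_gt0.
apply: contraT => not_co; pose p := pdiv (gcdn (a + d * N`_pi) N).
have g_gt1 : (1 < gcdn (a + d * N`_pi) N)%N.
  by rewrite ltn_neqAle eq_sym not_co gcdn_gt0 N_gt0 orbT.
have p_pr : prime p := pdiv_prime g_gt1.
have p_dvd_g : (p %| gcdn (a + d * N`_pi) N)%N := pdiv_dvd _.
have p_dvd_sum := dvdn_trans p_dvd_g (dvdn_gcdl _ _).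
have p_dvdN := dvdn_trans p_dvd_g (dvdn_gcdr _ _).
have [p_dvd_a|p_ndvd_a] := boolP (p %| a)%N.
  move: p_dvd_sum; rewrite (dvdn_addr _ p_dvd_a) Euclid_dvdM // dvd_part //.
  rewrite p_dvd_a orbF => p_dvd_d.
  have : (p %| gcdn a d)%N by rewrite dvdn_gcd p_dvd_a.
  by rewrite (eqP co_ad) dvdn1 => /eqP p1; rewrite p1 in p_pr.
by move: p_dvd_sum; rewrite dvdn_addl ?(negbTE p_ndvd_a) // dvdn_mull // dvd_part.
Qed.

Lemma card_coprime_ord d : #|[pred a : 'I_d | coprime a d]| = totient d.
Proof.
rewrite totient_count_coprime big_mkord -sum1_card big_mkcond /=.
by apply: eq_bigr => i _; rewrite inE /= coprime_sym; case: (coprime _ _).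
Qed.

Lemma totient_ramanujan_double_sum N d e : (0 < N)%N -> (d %| N)%N -> (e %| N)%N ->
  (totient d)%:R * ramanujan e (N %/ d) =
  \sum_(a < d | coprime a d) \sum_(b < e | coprime b e)
     expi N ^+ ((a * (N %/ d)) * (b * (N %/ e))).
Proof.
move=> N_gt0 d_dvdN e_dvdN; have z_prim := expi_prim N_gt0.
have ze_prim := dvdn_prim_root z_prim e_dvdN.
rewrite mulr_natl -card_coprime_ord -sumr_const; apply: eq_big => // a co_ad.
have [a' a'_mod co_a'N] := coprime_lift N_gt0 co_ad.
rewrite -(ramanujanMn_coprime _ (coprime_dvdr e_dvdN co_a'N)) (ramanujan_prim _ ze_prim).
apply: eq_bigr => b _; rewrite -exprM; apply/eqP; rewrite (eq_prim_root_expr z_prim).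
have a'_modN : (a' * (N %/ d) = a * (N %/ d) %[mod N])%N.
  set Nd := (N %/ d)%N; have -> : N = (d * Nd)%N by rewrite mulnC divnK.
  by rewrite -!muln_modl a'_mod.
rewrite [X in (X == _ %[mod N])%N](_ : _ = a' * (N %/ d) * (b * (N %/ e)))%N; last by ring.
by rewrite -modnMml a'_modN modnMml.
Qed.

Lemma ramanujan_sym N d e : (0 < N)%N -> (d %| N)%N -> (e %| N)%N ->
  (totient d)%:R * ramanujan e (N %/ d) = (totient e)%:R * ramanujan d (N %/ e).
Proof.
move=> N_gt0 d_dvdN e_dvdN; rewrite !totient_ramanujan_double_sum // exchange_big /=.
by apply: eq_bigr => b _; apply: eq_bigr => a _; rewrite mulnC.
Qed.

Lemma gcdn_coprime_factorl m n u v : coprime m n -> (u %| m)%N -> (v %| n)%N ->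
  gcdn m (u * v) = u.
Proof.
move=> co_mn u_dvdm v_dvdn.
by rewrite Gauss_gcdl ?(coprime_dvdr v_dvdn) //; apply/gcdn_idPr.
Qed.

Lemma gcdn_coprime_factorr m n u v : coprime m n -> (u %| m)%N -> (v %| n)%N ->
  gcdn n (u * v) = v.
Proof.
move=> co_mn u_dvdm v_dvdn.
by rewrite mulnC (gcdn_coprime_factorl _ v_dvdn u_dvdm) // coprime_sym.
Qed.

Lemma eqn_coprime_factors m n u v u' v' : coprime m n ->
  (u %| m)%N -> (u' %| m)%N -> (v %| n)%N -> (v' %| n)%N ->
  (u * v == u' * v')%N = (u == u') && (v == v').
Proof.
move=> co_mn u_dvdm u'_dvdm v_dvdn v'_dvdn.
apply/eqP/andP => [uv_eq|[/eqP-> /eqP->]] //; split; apply/eqP.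
  rewrite -(gcdn_coprime_factorl co_mn u_dvdm v_dvdn) uv_eq.
  exact: gcdn_coprime_factorl co_mn u'_dvdm v'_dvdn.
rewrite -(gcdn_coprime_factorr co_mn u_dvdm v_dvdn) uv_eq.
exact: gcdn_coprime_factorr co_mn u'_dvdm v'_dvdn.
Qed.

Lemma gcdnM_coprime x m n : coprime m n -> gcdn x (m * n) = (gcdn x m * gcdn x n)%N.
Proof.
move=> co_mn; apply/eqP; rewrite eqn_dvd; apply/andP; split.
  rewrite muln_gcdl dvdn_gcd dvdn_mulr ?dvdn_gcdl //=.
  by rewrite muln_gcdr dvdn_gcd dvdn_gcdr dvdn_mull ?dvdn_gcdl.
have co_g : coprime (gcdn x m) (gcdn x n).
  exact: coprime_dvdl (dvdn_gcdr _ _) (coprime_dvdr (dvdn_gcdr _ _) co_mn).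
by rewrite dvdn_gcd Gauss_dvd // !dvdn_gcdl dvdn_mul ?dvdn_gcdr.
Qed.

(** * Counting pairs with prescribed gcds *)

Lemma card_set_bij (T T' : finType) (f : T -> T') (P : pred T) (P' : pred T') :
  bijective f -> (forall x, P' (f x) = P x) -> #|[set x | P x]| = #|[set y | P' y]|.
Proof.
move=> f_bij P'f; rewrite -(card_imset _ (bij_inj f_bij)); apply: eq_card => y.
case: f_bij => g fK gK; rewrite inE; apply/imsetP/idP => [[x]|P'y].
  by rewrite inE => Px ->; rewrite P'f.
by exists (g y); rewrite ?gK // inE -P'f gK.
Qed.

Definition card_gcd_pairs N A B z := #|[set p : 'I_N * 'I_N |
  [&& gcdn p.1 N == A, gcdn p.2 N == B & (p.1 + p.2) %% N == z %% N]%N]|.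

Lemma card_gcd_pairsMn_coprime N A B z u : (0 < N)%N -> coprime u N ->
  card_gcd_pairs N A B (u * z) = card_gcd_pairs N A B z.
Proof.
move=> N_gt0 co_uN; pose f (x : 'I_N) : 'I_N := Ordinal (ltn_pmod (x * u) N_gt0).
have f_inj : injective f := ord_mulr_coprime_inj co_uN.
have g_inj : injective (fun p => (f p.1, f p.2)).
  move=> [x y] [x' y'] /= eq_xy; have := congr1 fst eq_xy; have := congr1 snd eq_xy.
  by move=> /= /f_inj-> /f_inj->.
apply/esym/card_set_bij; first exact: injF_bij g_inj.
have gcdn_Mu x : gcdn (x * u) N = gcdn x N.
  by rewrite gcdnC Gauss_gcdl 1?gcdnC // coprime_sym.
move=> [x y] /=; rewrite !gcdn_modl !gcdn_Mu; congr [&& _, _ & _].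
by rewrite modnDm -mulnDl (mulnC u) eqn_modMr_coprime.
Qed.

Lemma card_gcd_pairsM m n A1 A2 B1 B2 z : (0 < m)%N -> (0 < n)%N -> coprime m n ->
  (A1 %| m)%N -> (A2 %| n)%N -> (B1 %| m)%N -> (B2 %| n)%N ->
  card_gcd_pairs (m * n) (A1 * A2) (B1 * B2) z =
    (card_gcd_pairs m A1 B1 z * card_gcd_pairs n A2 B2 z)%N.
Proof.
move=> m_gt0 n_gt0 co_mn A1_dvd A2_dvd B1_dvd B2_dvd; rewrite /card_gcd_pairs -cardsX.
pose fm (x : 'I_(m * n)) : 'I_m := Ordinal (ltn_pmod x m_gt0).
pose fn (x : 'I_(m * n)) : 'I_n := Ordinal (ltn_pmod x n_gt0).
pose g (p : 'I_(m * n) * 'I_(m * n)) := ((fm p.1, fm p.2), (fn p.1, fn p.2)).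
have g_inj : injective g.
  have fmn_inj x y : fm x = fm y -> fn x = fn y -> x = y.
    move=> /(congr1 val) /= /eqP eq_m /(congr1 val) /= /eqP eq_n.
    by apply: ord_eq_mod; rewrite chinese_remainder // eq_m eq_n.
  move=> [x y] [x' y'] eq_g.
  have := congr1 (fun q => q.1.1) eq_g; have := congr1 (fun q => q.1.2) eq_g.
  have := congr1 (fun q => q.2.1) eq_g; have := congr1 (fun q => q.2.2) eq_g.
  by move=> /= eq_yn eq_xn eq_ym eq_xm; rewrite (fmn_inj x x') // (fmn_inj y y').
have g_bij : bijective g.
  apply: inj_card_bij g_inj _.
  by rewrite !card_prod !card_ord -!mulnA (mulnCA n m n).
rewrite (card_set_bij g_bij (P' := fun q : ('I_m * 'I_m) * ('I_n * 'I_n) =>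
  [&& gcdn q.1.1 m == A1, gcdn q.1.2 m == B1 & (q.1.1 + q.1.2) %% m == z %% m]%N &&
  [&& gcdn q.2.1 n == A2, gcdn q.2.2 n == B2 & (q.2.1 + q.2.2) %% n == z %% n]%N));
  last first.
  move=> [x y] /=; rewrite !gcdn_modl !gcdnM_coprime //.
  rewrite !(eqn_coprime_factors co_mn) ?dvdn_gcdr // !modnDm chinese_remainder //.
  by do ![case: (_ == _)].
by apply: eq_card => -[[x1 y1] [x2 y2]]; rewrite !inE.
Qed.

(** * The lexicographic product of divisor orderings *)

Lemma nth_prod_ordering ds es i i' : (i < size ds)%N -> (i' < size es)%N ->
  nth 0 (prod_ordering ds es) (sigma (size es) i i') = (nth 0 ds i * nth 0 es i')%N.
Proof.
rewrite /prod_ordering /sigma; elim: ds i => [|d ds IH] [|i] //= i_lt i'_lt.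
  by rewrite mul0n add0n nth_cat size_map i'_lt (nth_map 0%N).
by rewrite nth_cat size_map mulSn -addnA ltnNge leq_addr /= addKn IH.
Qed.

Lemma eq_sigma t j j' k k' : (j' < t)%N -> (k' < t)%N ->
  (sigma t j j' == sigma t k k') = (j == k) && (j' == k').
Proof.
move=> j'_lt k'_lt; apply/eqP/andP => [eq_jk|[/eqP-> /eqP->]] //.
have t_gt0 : (0 < t)%N by apply: leq_ltn_trans j'_lt.
have := congr1 (divn^~ t) eq_jk; have := congr1 (modn^~ t) eq_jk.
rewrite /sigma !modnMDl !divnMDl // !modn_small // !divn_small // !addn0.
by move=> -> ->.
Qed.

Lemma divisor_ordering_dvd N ds i : (0 < N)%N -> divisor_ordering N ds ->
  (i < size ds)%N -> (nth 0 ds i %| N)%N.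
Proof.
by move=> N_gt0 ds_perm i_lt; rewrite dvdn_divisors // -(perm_mem ds_perm) mem_nth.
Qed.

Lemma prod_divisor_ordering m n ds es : (0 < m)%N -> (0 < n)%N -> coprime m n ->
  divisor_ordering m ds -> divisor_ordering n es ->
  divisor_ordering (m * n) (prod_ordering ds es).
Proof.
move=> m_gt0 n_gt0 co_mn ds_perm es_perm.
have mn_gt0 : (0 < m * n)%N by rewrite muln_gt0 m_gt0.
have ds_dvd d : (d \in ds) = (d %| m)%N by rewrite (perm_mem ds_perm) dvdn_divisors.
have es_dvd e : (e \in es) = (e %| n)%N by rewrite (perm_mem es_perm) dvdn_divisors.
apply: uniq_perm; [|exact: divisors_uniq|move=> x; rewrite -dvdn_divisors //].
  rewrite allpairs_uniq ?(perm_uniq ds_perm) ?(perm_uniq es_perm) ?divisors_uniq //.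
  move=> [d e] [d' e'] /allpairsP[[u v] /= [u_in v_in [-> ->]]].
  move=> /allpairsP[[u' v'] /= [u'_in v'_in [-> ->]]] /= /eqP.
  rewrite (eqn_coprime_factors co_mn) -?ds_dvd -?es_dvd //.
  by case/andP=> /eqP-> /eqP->.
apply/allpairsP/idP => [[[d e] /= [+ + ->]]|x_dvd].
  by rewrite ds_dvd es_dvd; apply: dvdn_mul.
exists (gcdn x m, gcdn x n); rewrite /= ds_dvd es_dvd !dvdn_gcdr.
by rewrite -gcdnM_coprime //; split=> //; apply/esym/gcdn_idPl.
Qed.

Lemma divnMM m n u v : (u %| m)%N -> (v %| n)%N ->
  ((m * n) %/ (u * v) = (m %/ u) * (n %/ v))%N.
Proof. by move=> u_dvd v_dvd; rewrite divnMA -divn_mulAC // -muln_divA. Qed.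

Lemma Wentry_eq_Sentry N fs j k : (0 < N)%N ->
  (nth 0 fs j %| N)%N -> (nth 0 fs k %| N)%N -> Wentry N fs j k = Sentry N fs j k.
Proof.
move=> N_gt0 fj_dvd fk_dvd; rewrite /Wentry /Sentry ramanujan_sym // mulrC mulKf //.
by rewrite pnatr_eq0 -lt0n totient_gt0 (dvdn_gt0 N_gt0 fk_dvd).
Qed.

Section ProductOrdering.

Variables (m n : nat) (ds es : seq nat).
Hypotheses (m_gt0 : (0 < m)%N) (n_gt0 : (0 < n)%N) (co_mn : coprime m n).
Hypotheses (ds_perm : divisor_ordering m ds) (es_perm : divisor_ordering n es).

Let fs := prod_ordering ds es.
Let sig := sigma (size es).

Let ds_dvd i : (i < size ds)%N -> (nth 0 ds i %| m)%N.
Proof. exact: divisor_ordering_dvd. Qed.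

Let es_dvd i : (i < size es)%N -> (nth 0 es i %| n)%N.
Proof. exact: divisor_ordering_dvd. Qed.

Lemma Wentry_prod_ordering j k j' k' : (j < size ds)%N -> (k < size ds)%N ->
  (j' < size es)%N -> (k' < size es)%N ->
  Wentry (m * n) fs (sig j j') (sig k k') = Wentry m ds j k * Wentry n es j' k'.
Proof.
move=> j_lt k_lt j'_lt k'_lt; rewrite /Wentry !nth_prod_ordering //.
move: (ds_dvd j_lt) (ds_dvd k_lt) (es_dvd j'_lt) (es_dvd k'_lt).
set dj := nth 0 ds j; set dk := nth 0 ds k; set ej := nth 0 es j'; set ek := nth 0 es k'.
move=> dj_dvd dk_dvd ej_dvd ek_dvd.
have co_de u v : (u %| m)%N -> (v %| n)%N -> coprime u v.
  by move=> u_dvd v_dvd; apply: coprime_dvdl u_dvd (coprime_dvdr v_dvd co_mn).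
have ram_dk : ramanujan dk (m %/ dj * (n %/ ej)) = ramanujan dk (m %/ dj).
  by rewrite mulnC ramanujanMn_coprime // coprime_sym co_de ?dvdn_div.
have ram_ek : ramanujan ek (m %/ dj * (n %/ ej)) = ramanujan ek (n %/ ej).
  by rewrite ramanujanMn_coprime // co_de ?dvdn_div.
rewrite divnMM // !totient_coprime ?co_de // ramanujanM ?co_de // ram_dk ram_ek.
by rewrite !natrM invfM; ring.
Qed.

Lemma Dentry_prod_ordering i j k i' j' k' : (i < size ds)%N -> (j < size ds)%N ->
  (k < size ds)%N -> (i' < size es)%N -> (j' < size es)%N -> (k' < size es)%N ->
  Dentry (m * n) fs (sig i i') (sig j j') (sig k k')
    = Dentry m ds i j k * Dentry n es i' j' k'.
Proof.
move=> i_lt j_lt k_lt i'_lt j'_lt k'_lt; rewrite /Dentry eq_sigma //.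
have [_|_] := eqVneq j k; last by rewrite mul0r.
have [_|_] := eqVneq j' k'; last by rewrite mulr0.
exact: Wentry_prod_ordering.
Qed.

Lemma Mentry_prod_ordering i j k i' j' k' : (i < size ds)%N -> (j < size ds)%N ->
  (k < size ds)%N -> (i' < size es)%N -> (j' < size es)%N -> (k' < size es)%N ->
  Mentry (m * n) fs (sig i i') (sig j j') (sig k k')
    = (Mentry m ds i j k * Mentry n es i' j' k')%N.
Proof.
move=> i_lt j_lt k_lt i'_lt j'_lt k'_lt; rewrite /Mentry /a_coef.
rewrite -!/(card_gcd_pairs _ _ _ _) !nth_prod_ordering // !divnMM ?ds_dvd ?es_dvd //.
rewrite card_gcd_pairsM ?dvdn_div ?ds_dvd ?es_dvd //; congr (_ * _)%N.
  rewrite mulnC card_gcd_pairsMn_coprime //.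
  by apply: coprime_dvdl (dvdn_div (es_dvd k'_lt)) _; rewrite coprime_sym.
rewrite card_gcd_pairsMn_coprime //.
exact: coprime_dvdl (dvdn_div (ds_dvd k_lt)) co_mn.
Qed.

End ProductOrdering.

Theorem mainTheorem6 (m n : nat) (ds es : seq nat) :
  (0 < m)%N -> (0 < n)%N -> coprime m n ->
  divisor_ordering m ds -> divisor_ordering n es ->
  let fs := prod_ordering ds es in
  (forall i j k i' j' k' : nat,
     (i < tau m)%N -> (j < tau m)%N -> (k < tau m)%N ->
     (i' < tau n)%N -> (j' < tau n)%N -> (k' < tau n)%N ->
     [/\ Mentry (m * n) fs (sigma (tau n) i i') (sigma (tau n) j j') (sigma (tau n) k k')
           = (Mentry m ds i j k * Mentry n es i' j' k')%N,
         Dentry (m * n) fs (sigma (tau n) i i') (sigma (tau n) j j') (sigma (tau n) k k')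
           = Dentry m ds i j k * Dentry n es i' j' k' &
         Wentry (m * n) fs (sigma (tau n) j j') (sigma (tau n) k k')
           = Wentry m ds j k * Wentry n es j' k']) /\
  (forall j k : nat, (j < tau (m * n))%N -> (k < tau (m * n))%N ->
     Wentry (m * n) fs j k = Sentry (m * n) fs j k).
Proof.
move=> m_gt0 n_gt0 co_mn ds_perm es_perm fs.
have mn_gt0 : (0 < m * n)%N by rewrite muln_gt0 m_gt0.
have fs_perm := prod_divisor_ordering m_gt0 n_gt0 co_mn ds_perm es_perm.
rewrite /tau -(perm_size ds_perm) -(perm_size es_perm) -(perm_size fs_perm).
split=> [i j k i' j' k' *|j k j_lt k_lt].
  split; [exact: Mentry_prod_ordering | exact: Dentry_prod_ordering |].
  exact: Wentry_prod_ordering.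
by apply: Wentry_eq_Sentry; rewrite ?divisor_ordering_dvd.
Qed.
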